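(* Every maximal $k$-ideal of the semiring $V\mathbb{B}(\mathbf{t})^\circ=\{x\in V\mathbb{B}(\mathbf{t}):x\le1\}$ is of the form \[ \mathfrak{m}^\dagger_<=\Big\{\tfrac ab\in V\mathbb{B}(\mathbf{t})^\circ : \min{}_<(b)\notin a\Big\} \] for some monomial order $<$ on $\mathbb{N}^m$ (here $a,b\in V\mathbb{B}[\mathbf{t}]$ are viewed as finite subsets of $\mathbb{N}^m$, and the condition ''$\min_<(b)\notin a$'' is what the paper writes as $a_{\min_<(b)}=0$).
   Context: $V\mathbb{B}[\mathbf{t}]$ ($\mathbf{t}=(t_1,\dots,t_m)$) is the idempotent semiring of subsets of $\mathbb{N}^m$ equal to the vertex set of their Newton polyhedron $\operatorname{conv}(\cdot)+\mathbb{R}^m_{\ge0}$, with $a\oplus b$ = vertices of the Newton polyhedron of $a\cup b$, $a\odot b$ = vertices of that of $a+b$, $0=\emptyset$, $1=\{0\}$. $V\mathbb{B}(\mathbf{t})$ is its fraction semifield, ordered by $x\le y$ iff $x\oplus y=y$. An ideal of a semiring contains $0$ and is closed under addition and multiplication by semiring elements; it is a $k$-ideal if $a+b\in I$, $a\in I$ imply $b\in I$. A monomial order on $\mathbb{N}^m$ is a total order $<$ with $0<a$ for $a\ne0$ and $a<b\Rightarrow a+c<b+c$. *)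

From HB Require Import structures.
From mathcomp Require Import all_boot all_order all_algebra.
From mathcomp Require Import finmap boolp Rstruct.
From Stdlib Require Import Reals.
Set Implicit Arguments. Unset Strict Implicit. Unset Printing Implicit Defensive.
Import Order.TTheory GRing.Theory Num.Theory.
Local Open Scope fset_scope.
Local Open Scope ring_scope.

Section VB.
Variable m : nat.

Definition pt := {ffun 'I_m -> nat}.
Definition padd (x y : pt) : pt := [ffun i => (x i + y i)%N].
Definition pzero : pt := [ffun => 0%N].

Definition fsub := {fset pt}.

(* Newton polyhedron conv(S) + R^m_{>=0}, as a subset of R^m *)
Definition newton (S : fsub) (x : 'I_m -> R) : Prop :=
  exists lam : pt -> R,
    (forall s, 0 <= lam s) /\ \sum_(s <- S) lam s = 1 /\
    forall i, \sum_(s <- S) lam s * ((s i)%:R : R) <= x i.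

Definition is_vertex (S : fsub) (x : 'I_m -> R) : Prop :=
  newton S x /\
  forall y z, newton S y -> newton S z ->
    (forall i, x i = (y i + z i) / 2) -> forall i, y i = z i.

Definition embed (p : pt) : 'I_m -> R := fun i => ((p i)%:R : R).

(* vertex set of the Newton polyhedron of S (all vertices lie in S) *)
Definition Vert (S : fsub) : fsub := [fset p in S | `[< is_vertex S (embed p) >]].

(* elements of VB[t] *)
Definition isVB (a : fsub) : Prop := Vert a = a.

Definition vadd (a b : fsub) : fsub := Vert (a `|` b).
Definition vmul (a b : fsub) : fsub := Vert [fset padd x y | x in a, y in b].
Definition vzero : fsub := fset0.
Definition vone : fsub := [fset pzero].

(* fractions a/b of the semifield VB(t), represented by pairs (a,b) *)
Definition frac := (fsub * fsub)%type.
Definition isFrac (p : frac) : Prop := isVB p.1 /\ isVB p.2 /\ p.2 <> fset0.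
Definition frac_eq (p q : frac) : Prop := vmul p.1 q.2 = vmul q.1 p.2.
Definition frac_add (p q : frac) : frac :=
  (vadd (vmul p.1 q.2) (vmul q.1 p.2), vmul p.2 q.2).
Definition frac_mul (p q : frac) : frac := (vmul p.1 q.1, vmul p.2 q.2).
Definition fzero : frac := (vzero, vone).
Definition fone : frac := (vone, vone).
Definition frac_le (p q : frac) : Prop := frac_eq (frac_add p q) q.

Definition circ (p : frac) : Prop := isFrac p /\ frac_le p fone.

(* subsets of VB(t)^o, given as predicates on representatives that are
   closed under equality of fractions *)
Definition subset_circ (I : frac -> Prop) : Prop :=
  (forall p, I p -> circ p) /\
  (forall p q, circ q -> frac_eq p q -> I p -> I q).

Definition ideal (I : frac -> Prop) : Prop :=
  subset_circ I /\ I fzero /\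
  (forall p q, I p -> I q -> I (frac_add p q)) /\
  (forall r p, circ r -> I p -> I (frac_mul r p)).

Definition k_ideal (I : frac -> Prop) : Prop :=
  ideal I /\
  forall p q, circ p -> circ q -> I (frac_add p q) -> I p -> I q.

Definition proper (I : frac -> Prop) : Prop := exists p, circ p /\ ~ I p.

Definition maximal_k_ideal (I : frac -> Prop) : Prop :=
  k_ideal I /\ proper I /\
  forall J, k_ideal J -> proper J -> (forall p, I p -> J p) ->
    forall p, J p -> I p.

Definition monomial_order (lt : pt -> pt -> Prop) : Prop :=
  (forall x, ~ lt x x) /\
  (forall x y z, lt x y -> lt y z -> lt x z) /\
  (forall x y, x <> y -> lt x y \/ lt y x) /\
  (forall a, a <> pzero -> lt pzero a) /\
  (forall a b c, lt a b -> lt (padd a c) (padd b c)).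

Definition is_min (lt : pt -> pt -> Prop) (b : fsub) (y : pt) : Prop :=
  y \in b /\ forall z, z \in b -> z <> y -> lt y z.

Definition mdagger (lt : pt -> pt -> Prop) (p : frac) : Prop :=
  circ p /\
  exists a b, isFrac (a, b) /\ frac_eq p (a, b) /\
    exists y, is_min lt b y /\ y \notin a.

End VB.

(* Call a monomial order < a vertex order if the <-minimum of every finite subset of N^m is
   a vertex of its Newton polyhedron; positive weight orders with lexicographic tie-breaking
   are vertex orders. For a vertex order, the fractions a/b with min_<(b) not in a form a
   proper k-ideal m^dagger_<, and a sum lies in it only if both summands do.
   Let I be a maximal k-ideal. An element a/b of I is not 1, so some vertex y of b is
   missing from a; a positive weight vector separating y from the rest of b (Gordan's
   alternative) gives a weight order with a/b in m^dagger_<. Applied to a sum, this puts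
   finitely many elements of I into one m^dagger_<. Hence setting u < v iff v/(u (+) v) lies
   in I defines a monomial order, as each axiom involves finitely many such fractions. Finally,
   the fractions lying in m^dagger_< for every vertex order < that serves a given element
   of I form a proper k-ideal containing I, so they lie in I by maximality; this identifies
   I with m^dagger of the order just defined. *)

From Pilot Require Import Defs.
From mathcomp Require Import all_boot all_order all_algebra finmap boolp Rstruct.
From Stdlib Require Import Reals.
From mathcomp Require Import ring lra.
Set Implicit Arguments. Unset Strict Implicit. Unset Printing Implicit Defensive.
Import Order.TTheory GRing.Theory Num.Theory.
Local Open Scope fset_scope.
Local Open Scope ring_scope.

(** * Newton polyhedra *)

Section Newton.
Variable m : nat.
Local Notation pt := (Defs.pt m).
Local Notation fsub := (Defs.fsub m).
Implicit Types (S T A B C : fsub) (s t u v y : pt) (x : 'I_m -> R) (lam mu : pt -> R).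

Definition newton_sub A B := forall x, newton A x -> newton B x.

Definition wmean S lam (i : 'I_m) : R := \sum_(s <- S) lam s * (s i)%:R.

Lemma sum_delta S t0 (g : pt -> R) :
  t0 \in S -> \sum_(t <- S) (t == t0)%:R * g t = g t0.
Proof.
move=> tS; rewrite (big_fsetD1 t0) //= eqxx mul1r big1_seq ?addr0 //.
by move=> t /andP[_]; rewrite in_fsetD1 => /andP[/negbTE -> _]; rewrite mul0r.
Qed.

Lemma sum_delta1 S t0 : t0 \in S -> \sum_(t <- S) ((t == t0)%:R : R) = 1.
Proof.
by move=> tS; rewrite -[RHS](sum_delta (fun=> 1) tS); apply: eq_bigr => t _; rewrite mulr1.
Qed.

Lemma sum_support1 S y (f : pt -> R) :
  y \in S -> (forall s, s \in S -> s != y -> f s = 0) -> \sum_(s <- S) f s = f y.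
Proof.
move=> yS f0; rewrite (big_fsetD1 y) //= big1_seq ?addr0 // => s /andP[_].
by rewrite in_fsetD1 => /andP[sy sS]; apply: f0.
Qed.

Lemma newton_wmean S lam :
  (forall s, 0 <= lam s) -> \sum_(s <- S) lam s = 1 -> newton S (wmean S lam).
Proof. by move=> l0 l1; exists lam. Qed.

Lemma newton_embed S s : s \in S -> newton S (embed s).
Proof.
move=> sS; exists (fun t => (t == s)%:R); split; first by move=> t; rewrite ler0n.
split; first exact: sum_delta1.
by move=> i; rewrite (sum_delta (fun t => ((t i)%:R : R))).
Qed.

Lemma newton_hull S T : (forall s, s \in S -> newton T (embed s)) -> newton_sub S T.
Proof.
move=> hST x [lam [l0 [l1 l2]]].
have /choice [mu hmu] : forall s : pt, exists mu : pt -> R, s \in S ->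
    (forall t, 0 <= mu t) /\ \sum_(t <- T) mu t = 1 /\
    forall i, \sum_(t <- T) mu t * (t i)%:R <= (s i)%:R.
  move=> s; case: (boolP (s \in S)) => sS; last by exists (fun=> 0).
  by have [mu hm] := hST s sS; exists mu.
exists (fun t => \sum_(s <- S) lam s * mu s t); split; [|split].
- move=> t; rewrite big_seq; apply: sumr_ge0 => s sS.
  by apply: mulr_ge0; [exact: l0 | exact: (hmu s sS).1].
- rewrite exchange_big /= -l1 big_seq [RHS]big_seq; apply: eq_bigr => s sS.
  by rewrite -mulr_sumr (hmu s sS).2.1 mulr1.
- move=> i; apply: le_trans (l2 i).
  under eq_bigr do rewrite mulr_suml.
  rewrite exchange_big /= big_seq [X in _ <= X]big_seq; apply: ler_sum => s sS.
  under eq_bigr do rewrite -mulrA.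
  by rewrite -mulr_sumr; apply: ler_wpM2l; [exact: l0 | exact: (hmu s sS).2.2 i].
Qed.

Lemma newton_subset S T : S `<=` T -> newton_sub S T.
Proof. by move=> ST; apply: newton_hull => s sS; apply/newton_embed/(fsubsetP ST). Qed.

Lemma fset_neq0P S : S <> fset0 <-> exists t, t \in S.
Proof.
split => [S0|[t tS] S0]; last by move: tS; rewrite S0 inE.
case: (pselect (exists t, t \in S)) => // noS; case: S0.
by apply/fsetP => t; rewrite inE; apply/negP => tS; apply: noS; exists t.
Qed.

Lemma pos_weight S lam : \sum_(s <- S) lam s = 1 -> exists2 t, t \in S & 0 < lam t.
Proof.
move=> l1; case: (pselect (exists2 t, t \in S & 0 < lam t)) => // nopos.
have : \sum_(s <- S) lam s <= 0.
  rewrite big_seq; apply: sumr_le0 => s sS; rewrite leNgt; apply/negP => ls.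
  by apply: nopos; exists s.
by rewrite l1 ler10.
Qed.

Lemma newton_nonempty S x : newton S x -> exists t, t \in S.
Proof. by move=> [lam [_ [/pos_weight [t tS _] _]]]; exists t. Qed.

Lemma embed_inj : injective (@embed m).
Proof.
move=> p t e; apply/ffunP => i.
by apply/eqP; rewrite -(eqr_nat R); apply/eqP; apply: (congr1 (fun f => f i) e).
Qed.

Lemma vertex_wmean S x lam :
  is_vertex S x -> (forall s, 0 <= lam s) -> \sum_(s <- S) lam s = 1 ->
  (forall i, wmean S lam i <= x i) -> forall i, x i = wmean S lam i.
Proof.
move=> [_ hv] l0 l1 l2 i.
have reflected : newton S (fun i => 2 * x i - wmean S lam i).
  by exists lam; do 2 split => //; move=> j; have := l2 j; rewrite /wmean; lra.
have mid j : x j = (2 * x j - wmean S lam j + wmean S lam j) / 2 by lra.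
by have := hv _ _ reflected (newton_wmean l0 l1) mid i; lra.
Qed.

Lemma newton_toward S lam t0 k :
  (forall s, 0 <= lam s) -> \sum_(s <- S) lam s = 1 -> t0 \in S ->
  k <= 1 -> 0 <= (1 - k) * lam t0 + k ->
  newton S (fun i => (1 - k) * wmean S lam i + k * (t0 i)%:R).
Proof.
move=> l0 l1 t0S k1 kt0.
exists (fun t => (1 - k) * lam t + k * (t == t0)%:R); split; [|split].
- move=> t; have [->|_] := eqVneq t t0; first by rewrite mulr1.
  by rewrite mulr0 addr0; apply: mulr_ge0; [lra | exact: l0].
- by rewrite big_split /= -!mulr_sumr l1 sum_delta1 //; lra.
- move=> i; under eq_bigr do rewrite mulrDl -!mulrA.
  by rewrite big_split /= -!mulr_sumr sum_delta.
Qed.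

Lemma vertex_support S x lam t0 :
  is_vertex S x -> (forall s, 0 <= lam s) -> \sum_(s <- S) lam s = 1 ->
  (forall i, wmean S lam i <= x i) ->
  t0 \in S -> 0 < lam t0 -> forall i, x i = (t0 i)%:R.
Proof.
move=> hx l0 l1 l2 t0S lt0 i.
have xE := vertex_wmean hx l0 l1 l2.
set k := lam t0.
have k1 : k <= 1 by rewrite -l1 (big_fsetD1 t0) //= lerDl; apply: sumr_ge0 => s _.
have k0 : 0 < k := lt0.
have kN1 : - k <= 1 by lra.
have ge1 : 0 <= (1 - k) * k + k by apply: addr_ge0; [apply: mulr_ge0|]; lra.
have kk : 0 <= k * k by apply: mulr_ge0; lra.
have ge2 : 0 <= (1 - - k) * k + - k by lra.
have mid : forall j, x j = ((1 - k) * wmean S lam j + k * (t0 j)%:R +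
                            ((1 - - k) * wmean S lam j + - k * (t0 j)%:R)) / 2.
  by move=> j; rewrite -xE; lra.
have := hx.2 _ _ (newton_toward l0 l1 t0S k1 ge1) (newton_toward l0 l1 t0S kN1 ge2) mid i.
rewrite -xE => e; have : k * ((t0 i)%:R - x i) = 0 by lra.
by move/eqP; rewrite mulf_eq0 gt_eqF //= subr_eq0 => /eqP.
Qed.

Lemma vertex_embed S x : is_vertex S x -> exists2 t, t \in S & x = embed t.
Proof.
move=> hx; have [[lam [l0 [l1 l2]]] _] := hx.
have [t tS lt] := pos_weight l1.
by exists t => //; apply: funext => i; apply: (vertex_support hx l0 l1 l2 tS lt).
Qed.

Lemma vertex_witness_pos S y lam : is_vertex S (embed y) ->
  (forall s, 0 <= lam s) -> \sum_(s <- S) lam s = 1 ->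
  (forall i, wmean S lam i <= (y i)%:R) -> 0 < lam y.
Proof.
move=> hy l0 l1 l2; have [t tS lt] := pos_weight l1.
suff -> : y = t by [].
by apply: embed_inj; apply: funext => i; apply: (vertex_support hy l0 l1 l2 tS lt).
Qed.

Lemma in_Vert S p : (p \in Vert S) = (p \in S) && `[< is_vertex S (embed p) >].
Proof. by rewrite !inE. Qed.

Lemma Vert_sub S : Vert S `<=` S.
Proof. by apply/fsubsetP => p; rewrite in_Vert => /andP[]. Qed.

Lemma Vert_eq A B : (forall x, newton A x <-> newton B x) -> Vert A = Vert B.
Proof.
suff incl A' B' : (forall x, newton A' x <-> newton B' x) -> Vert A' `<=` Vert B'.
  move=> AB; apply/eqP; rewrite eqEfsubset !incl // => x.
  by split=> /AB.
move=> AB; apply/fsubsetP => p; rewrite !in_Vert => /andP[_ /asboolP [nA hv]].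
have vB : is_vertex B' (embed p).
  by split; [apply/AB | move=> y z ny nz; apply: hv; apply/AB].
have [t tB /embed_inj pt] := vertex_embed vB; subst t.
by rewrite tB; apply/asboolP.
Qed.

Lemma newton_fsetD1 S s (y z : 'I_m -> R) i0 :
  s \in S -> newton S y -> newton S z -> (forall i, embed s i = (y i + z i) / 2) ->
  y i0 <> z i0 -> newton (S `\ s) (embed s).
Proof.
move=> sS [la [la0 [la1 la2]]] [mu [mu0 [mu1 mu2]]] mid yz.
rewrite (big_fsetD1 s) //= in la1; rewrite (big_fsetD1 s) //= in mu1.
have {}la2 i : la s * (s i)%:R + wmean (S `\ s) la i <= y i.
  by move: (la2 i); rewrite (big_fsetD1 s).
have {}mu2 i : mu s * (s i)%:R + wmean (S `\ s) mu i <= z i.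
  by move: (mu2 i); rewrite (big_fsetD1 s).
have wmean_ge0 lam i : (forall t, 0 <= lam t) -> 0 <= wmean (S `\ s) lam i.
  by move=> l0; apply: sumr_ge0 => t _; apply: mulr_ge0; rewrite ?ler0n.
have las := la0 s; have mus := mu0 s.
have [ls_ms|] := ltP (la s + mu s) 2; last first.
  (* all the weight of y and z sits at s, so y, z >= s, forcing y = z = s *)
  move=> ls_ms; have laS : 0 <= \sum_(t <- S `\ s) la t by apply: sumr_ge0.
  have muS : 0 <= \sum_(t <- S `\ s) mu t by apply: sumr_ge0.
  have la_s : la s = 1 by lra.
  have mu_s : mu s = 1 by lra.
  have := la2 i0; have := mu2 i0; have := mid i0.
  have := wmean_ge0 la i0 la0; have := wmean_ge0 mu i0 mu0.
  by rewrite la_s mu_s /embed; lra.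
set d := 2 - (la s + mu s); have d0 : 0 < d by rewrite /d; lra.
exists (fun t => (la t + mu t) / d); split; [|split].
- by move=> t; apply: divr_ge0; [apply: addr_ge0 | apply: ltW].
- rewrite -mulr_suml big_split /=.
  have -> : \sum_(t <- S `\ s) la t + \sum_(t <- S `\ s) mu t = d by rewrite /d; lra.
  by rewrite mulfV // gt_eqF.
- move=> i; under eq_bigr do rewrite mulrAC.
  rewrite -mulr_suml ler_pdivrMr //.
  under eq_bigr do rewrite mulrDl.
  rewrite big_split /=; have := la2 i; have := mu2 i; have := mid i.
  by rewrite /d /embed /wmean; lra.
Qed.

Lemma newton_remove S s :
  s \in S -> ~ is_vertex S (embed s) -> newton (S `\ s) (embed s).
Proof.
move=> sS nv; case: (pselect (exists (y z : 'I_m -> R) i0, [/\ newton S y, newton S z,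
    forall i, embed s i = (y i + z i) / 2 & y i0 <> z i0])) => [[y [z [i0 []]]]|nosplit].
  exact: newton_fsetD1.
case: nv; split => [|y z ny nz mid i]; first exact: newton_embed.
by case: (pselect (y i = z i)) => // yz; case: nosplit; exists y, z, i.
Qed.

Lemma newton_Vert S : newton_sub S (Vert S).
Proof.
move: {2}#|`S| (leqnn #|`S|) => n; elim: n S => [|n IH] S hS x.
  by move=> /newton_nonempty [t tS]; move: hS; rewrite (cardfsD1 t) tS.
apply: newton_hull => s sS.
case: (pselect (is_vertex S (embed s))) => hv.
  by apply: newton_embed; rewrite in_Vert sS; apply/asboolP.
have same : forall x, newton (S `\ s) x <-> newton S x.
  move=> y; split; first by apply/newton_subset/fsubD1set.
  apply: newton_hull => t tS; have [->|ts] := eqVneq t s; first exact: newton_remove.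
  by apply: newton_embed; rewrite in_fsetD1 ts tS.
rewrite -(Vert_eq same); apply: IH (newton_remove sS hv).
by move: hS; rewrite (cardfsD1 s) sS.
Qed.

Lemma newton_VertE S x : newton (Vert S) x <-> newton S x.
Proof. by split; [apply/newton_subset/Vert_sub | apply: newton_Vert]. Qed.

Lemma Vert_idem S : Vert (Vert S) = Vert S.
Proof. exact/Vert_eq/newton_VertE. Qed.

Lemma Vert_nonempty S t : t \in S -> exists u, u \in Vert S.
Proof. by move=> /newton_embed /newton_Vert /newton_nonempty. Qed.

Lemma vertex_of_witness_support S y : y \in S ->
  (forall lam, (forall s, 0 <= lam s) -> \sum_(s <- S) lam s = 1 ->
     (forall i, wmean S lam i <= (y i)%:R) -> forall s, s \in S -> s != y -> lam s = 0) ->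
  is_vertex S (embed y).
Proof.
move=> yS supp; split => [|p q [la [la0 [la1 la2]]] [mu [mu0 [mu1 mu2]]] mid i].
  exact: newton_embed.
pose nu s := (la s + mu s) / 2.
have nu0 s : 0 <= nu s by have := la0 s; have := mu0 s; rewrite /nu; lra.
have nu1 : \sum_(s <- S) nu s = 1 by rewrite -mulr_suml big_split /= la1 mu1; lra.
have nu_wit j : wmean S nu j <= (y j)%:R.
  have -> : wmean S nu j = (wmean S la j + wmean S mu j) / 2.
    by rewrite /wmean -big_split mulr_suml; apply: eq_bigr => s _ /=; rewrite /nu; ring.
  by have := la2 j; have := mu2 j; have := mid j; rewrite /embed /wmean; lra.
have off s : s \in S -> s != y -> la s = 0 /\ mu s = 0.
  move=> sS sy; have := supp _ nu0 nu1 nu_wit s sS sy.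
  by have := la0 s; have := mu0 s; rewrite /nu; split; lra.
have wmean_y lam : (forall s, s \in S -> s != y -> lam s = 0) ->
    \sum_(s <- S) lam s = 1 -> wmean S lam i = (y i)%:R.
  move=> lam0; rewrite (sum_support1 yS) // => lam_y.
  rewrite /wmean (sum_support1 yS) ?lam_y ?mul1r // => s sS sy.
  by rewrite lam0 ?mul0r.
have := wmean_y la (fun s sS sy => (off s sS sy).1) la1.
have := wmean_y mu (fun s sS sy => (off s sS sy).2) mu1.
by have := la2 i; have := mu2 i; have := mid i; rewrite /embed /wmean; lra.
Qed.

Lemma Vert_fset1 v : Vert [fset v] = [fset v].
Proof.
apply/eqP; rewrite eqEfsubset Vert_sub /=; apply/fsubsetP => p; rewrite inE => /eqP ->.
rewrite in_Vert inE eqxx /=; apply/asboolP/vertex_of_witness_support; first by rewrite inE.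
by move=> lam _ _ _ s; rewrite inE => ->.
Qed.

Lemma newton_sub_fsetU A B C :
  newton_sub A C -> newton_sub B C -> newton_sub (A `|` B) C.
Proof.
move=> AC BC; apply: newton_hull => s; rewrite inE => /orP[] ?.
  exact/AC/newton_embed.
exact/BC/newton_embed.
Qed.

Lemma Vert_fsetU_id A B : isVB B -> Vert (A `|` B) = B <-> newton_sub A B.
Proof.
move=> vB; split => [AB x nA|AB].
  by rewrite -AB; apply/newton_Vert/(newton_subset (fsubsetUl A B)).
rewrite -[RHS]vB; apply: Vert_eq => x; split; first exact: newton_sub_fsetU.
exact/newton_subset/fsubsetUr.
Qed.

Definition ssum A B : fsub := [fset padd x y | x in A, y in B].

Lemma paddE s t i : padd s t i = addn (s i) (t i).
Proof. by rewrite ffunE. Qed.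

Lemma paddC s t : padd s t = padd t s.
Proof. by apply/ffunP => i; rewrite !paddE addnC. Qed.

Lemma padd0 s : padd s (pzero m) = s.
Proof. by apply/ffunP => i; rewrite paddE ffunE addn0. Qed.

Lemma paddIr t : injective (fun s => padd s t).
Proof. by move=> s u /ffunP e; apply/ffunP => i; move: (e i); rewrite !paddE => /addIn. Qed.

Lemma in_ssum A B z :
  reflect (exists s t, [/\ s \in A, t \in B & z = padd s t]) (z \in ssum A B).
Proof.
apply: (iffP (imfset2P _ _ _ _ _)) => [[s sA [t tB ->]]|[s [t [sA tB ->]]]].
  by exists s, t.
by exists s => //; exists t.
Qed.

Lemma mem_ssum A B s t : s \in A -> t \in B -> padd s t \in ssum A B.
Proof. by move=> sA tB; apply/in_ssum; exists s, t. Qed.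

Lemma ssumC A B : ssum A B = ssum B A.
Proof.
by apply/fsetP => z; apply/in_ssum/in_ssum => [][s [t [sA tB ->]]]; exists t, s; rewrite paddC.
Qed.

Lemma ssum_vone A : ssum A (vone m) = A.
Proof.
apply/fsetP => z; apply/in_ssum/idP => [[s [t [sA]]]|zA].
  by rewrite inE => /eqP -> ->; rewrite padd0.
by exists z, (pzero m); rewrite inE eqxx padd0.
Qed.

Lemma vmulC A B : vmul A B = vmul B A.
Proof. by rewrite /vmul -/(ssum A B) ssumC. Qed.

Lemma vmul_vone A : vmul A (vone m) = Vert A.
Proof. by rewrite /vmul -/(ssum A _) ssum_vone. Qed.

Lemma in_vmul A B z : z \in vmul A B -> exists s t, [/\ s \in A, t \in B & z = padd s t].
Proof. by move=> /(fsubsetP (Vert_sub _)) /in_ssum. Qed.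

Lemma sum_pushforward B T (f : pt -> pt) mu (g : pt -> R) :
  (forall u, u \in B -> f u \in T) ->
  \sum_(w <- T) (\sum_(u <- B) mu u * (w == f u)%:R) * g w = \sum_(u <- B) mu u * g (f u).
Proof.
move=> fBT; under eq_bigr do rewrite mulr_suml.
rewrite exchange_big /= big_seq [RHS]big_seq; apply: eq_bigr => u uB.
by under eq_bigr do rewrite -mulrA; rewrite -mulr_sumr sum_delta ?fBT.
Qed.

Lemma newton_translate B C x t : newton B x -> t \in C ->
  newton (ssum B C) (fun i => x i + (t i)%:R).
Proof.
move=> [mu [mu0 [mu1 mu2]]] tC.
have tr : forall u, u \in B -> padd u t \in ssum B C by move=> u uB; apply: mem_ssum.
exists (fun w => \sum_(u <- B) mu u * (w == padd u t)%:R); split; [|split].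
- by move=> w; apply: sumr_ge0 => u _; apply: mulr_ge0; rewrite ?ler0n.
- have := sum_pushforward mu (fun=> 1) tr.
  under eq_bigr do rewrite mulr1.
  by move=> ->; under eq_bigr do rewrite mulr1.
- move=> i; rewrite (sum_pushforward mu (fun w => ((w i)%:R : R)) tr).
  under eq_bigr do rewrite paddE natrD mulrDr.
  by rewrite big_split /= -mulr_suml mu1 mul1r lerD2r.
Qed.

Lemma newton_sub_ssum A B C : newton_sub A B -> newton_sub (ssum A C) (ssum B C).
Proof.
move=> AB; apply: newton_hull => r /in_ssum [s [t [sA tC ->]]].
have -> : embed (padd s t) = (fun i => embed s i + (t i)%:R).
  by apply: funext => i; rewrite /embed paddE natrD.
exact/newton_translate/tC/AB/newton_embed.
Qed.

Lemma newton_sub_vmul a b c d :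
  newton_sub a b -> newton_sub c d -> newton_sub (vmul a c) (vmul b d).
Proof.
move=> ab cd x /newton_VertE nx; apply/newton_VertE.
move: nx => /(newton_sub_ssum ab); rewrite ssumC => /(newton_sub_ssum cd).
by rewrite ssumC.
Qed.

Lemma vmul_neq0 A B : A <> fset0 -> B <> fset0 -> vmul A B <> fset0.
Proof.
move=> /fset_neq0P [s sA] /fset_neq0P [t tB]; apply/fset_neq0P.
exact: Vert_nonempty (mem_ssum sA tB).
Qed.

Lemma circP a b :
  circ (a, b) <-> [/\ isVB a, isVB b, b <> fset0 & newton_sub a b].
Proof.
rewrite /circ /isFrac /frac_le /frac_eq /frac_add /fone /= /vadd.
rewrite ![vmul (vone m) _]vmulC !vmul_vone !Vert_idem.
split => [[[va [vb b0]]]|[va vb b0]]; rewrite va vb => /(Vert_fsetU_id _ vb) //.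
Qed.

Lemma circ_mul (p q : Defs.frac m) : circ p -> circ q -> circ (frac_mul p q).
Proof.
case: p q => [a b] [c d] /circP [_ _ b0 ab] /circP [_ _ d0 cd]; apply/circP.
by split; [exact: Vert_idem | exact: Vert_idem | exact: vmul_neq0 | exact: newton_sub_vmul].
Qed.

Lemma circ_add (p q : Defs.frac m) : circ p -> circ q -> circ (frac_add p q).
Proof.
case: p q => [a b] [c d] /circP [_ _ b0 ab] /circP [_ _ d0 cd]; apply/circP.
split; [exact: Vert_idem | exact: Vert_idem | exact: vmul_neq0 |].
move=> x /newton_VertE; apply: newton_sub_fsetU; first exact: newton_sub_vmul.
by rewrite (vmulC b); apply: newton_sub_vmul.
Qed.

Lemma circ_fzero : circ (fzero m).
Proof.
apply/circP; split; [| exact: Vert_fset1 | by apply/fset_neq0P; exists (pzero m); rewrite inE |].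
  by apply/fsetP => z; rewrite in_Vert inE.
by move=> x /newton_nonempty [t]; rewrite inE.
Qed.

Lemma circ_fone : circ (fone m).
Proof.
apply/circP; split; [exact: Vert_fset1 | exact: Vert_fset1 | | by []].
by apply/fset_neq0P; exists (pzero m); rewrite inE.
Qed.

End Newton.

(** * Monomial orders and the ideals m^dagger *)

Section MonomialOrder.
Variable m : nat.
Local Notation pt := (Defs.pt m).
Local Notation fsub := (Defs.fsub m).
Implicit Types (S A B : fsub) (s t u v w x y z : pt).
Variable lt : pt -> pt -> Prop.
Hypothesis mo : monomial_order lt.

Definition le_of u v := u = v \/ lt u v.

Lemma mo_irr u : ~ lt u u. Proof. by case: mo. Qed.

Lemma mo_trans u v w : lt u v -> lt v w -> lt u w.
Proof. by case: mo => _ [+ _]; apply. Qed.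

Lemma mo_total u v : u <> v -> lt u v \/ lt v u.
Proof. by case: mo => _ [_ [+ _]]; apply. Qed.

Lemma mo_gt0 u : u <> pzero m -> lt (pzero m) u.
Proof. by case: mo => _ [_ [_ [+ _]]]; apply. Qed.

Lemma mo_addr w u v : lt u v -> lt (padd u w) (padd v w).
Proof. by case: mo => _ [_ [_ [_ +]]]; apply. Qed.

Lemma mo_addl w u v : lt u v -> lt (padd w u) (padd w v).
Proof. by rewrite ![padd w _]paddC; apply: mo_addr. Qed.

Lemma mo_asym u v : lt u v -> lt v u -> False.
Proof. by move=> uv vu; apply: (@mo_irr u); apply: mo_trans uv vu. Qed.

Lemma le_of_lt_trans u v w : le_of u v -> lt v w -> lt u w.
Proof. by case=> [->//|]; apply: mo_trans. Qed.

Lemma lt_le_of_trans u v w : lt u v -> le_of v w -> lt u w.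
Proof. by move=> uv [<-//|]; apply: mo_trans. Qed.

Lemma le_of_total u v : le_of u v \/ lt v u.
Proof.
case: (pselect (u = v)) => [->|uv]; first by left; left.
by case: (mo_total uv) => ?; [left; right | right].
Qed.

Lemma lt_le_of_add u v s t : lt u v -> le_of s t -> lt (padd u s) (padd v t).
Proof.
move=> uv st; apply: (@lt_le_of_trans _ (padd v s)); first exact: mo_addr.
by case: st => [->|st]; [left | right; apply: mo_addl].
Qed.

Lemma le_of_add u v s t : le_of u v -> le_of s t -> le_of (padd u s) (padd v t).
Proof.
case=> [->|uv] st; last by right; apply: lt_le_of_add.
by case: st => [->|st]; [left | right; apply: mo_addl].
Qed.

Lemma ex_min_seq (s : seq pt) t :
  t \in s -> exists2 y, y \in s & forall z, z \in s -> z <> y -> lt y z.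
Proof.
elim: s t => [//|u s IH] t _; case: s IH => [|v s] IH.
  by exists u => [|z]; rewrite ?inE ?eqxx // => /eqP.
have [y ys ymin] := IH v (mem_head v s).
have [uy|yu] := le_of_total u y.
  exists u => [|z]; first by rewrite inE eqxx.
  rewrite inE => /orP[/eqP-> //|zs zu].
  case: (pselect (z = y)) => [zy|zy]; last exact: le_of_lt_trans uy (ymin _ zs zy).
  by subst z; case: uy => // uy; case: zu.
exists y => [|z]; first by rewrite inE ys orbT.
by rewrite inE => /orP[/eqP-> //|zs]; apply: ymin.
Qed.

Lemma ex_min S t : t \in S -> exists y, is_min lt S y.
Proof. by move=> /(@ex_min_seq S) [y yS ymin]; exists y. Qed.

Lemma min_uniq S y z : is_min lt S y -> is_min lt S z -> y = z.
Proof.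
move=> [yS ymin] [zS zmin]; case: (pselect (y = z)) => // yz.
by case: (mo_asym (zmin _ yS yz) (ymin _ zS (nesym yz))).
Qed.

Lemma min_le S y : is_min lt S y -> {in S, forall z, le_of y z}.
Proof.
move=> [_ ymin] z zS; case: (pselect (z = y)) => [->|zy]; first by left.
by right; apply: ymin.
Qed.

Lemma is_minP S y : y \in S -> (forall z, z \in S -> le_of y z) -> is_min lt S y.
Proof. by move=> yS ymin; split => // z zS zy; case: (ymin z zS) => // yz; case: zy. Qed.

Lemma min_ssum A B y z : is_min lt A y -> is_min lt B z ->
  is_min lt (ssum A B) (padd y z).
Proof.
move=> ymin zmin; apply: is_minP; first by apply: mem_ssum; [case: ymin | case: zmin].
move=> w /in_ssum [s [t [sA tB ->]]].
by apply: le_of_add; [apply: (min_le ymin) | apply: (min_le zmin)].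
Qed.

Lemma circ_ex_min a b : circ (a, b) -> exists y, is_min lt b y.
Proof. by move=> /circP [_ _ /fset_neq0P [t tb] _]; apply: ex_min tb. Qed.

End MonomialOrder.

Definition vertex_order m (lt : pt m -> pt m -> Prop) :=
  monomial_order lt /\ forall (S : Defs.fsub m) y, is_min lt S y -> y \in Vert S.

Definition misses_min m (lt : pt m -> pt m -> Prop) (p : Defs.frac m) :=
  forall y, is_min lt p.2 y -> y \notin p.1.

Definition cmp_frac m (u v : pt m) : Defs.frac m := ([fset v], vadd [fset u] [fset v]).

Section VertexOrder.
Variable m : nat.
Local Notation pt := (Defs.pt m).
Local Notation fsub := (Defs.fsub m).
Local Notation frac := (Defs.frac m).
Implicit Types (S A B a b c d : fsub) (s t u v w x y z : pt) (p q : frac).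
Variable lt : pt -> pt -> Prop.
Hypothesis vo : vertex_order lt.
Let mo : monomial_order lt := vo.1.

Lemma min_Vert S y : is_min lt S y -> is_min lt (Vert S) y.
Proof.
by move=> [yS ymin]; split => [|z /(fsubsetP (Vert_sub S))]; [apply: vo.2 | apply: ymin].
Qed.

Lemma min_vmul A B y z : is_min lt A y -> is_min lt B z -> is_min lt (vmul A B) (padd y z).
Proof. by move=> ymin zmin; apply/min_Vert/min_ssum. Qed.

(* the minimum of a `|` b is a vertex of Newton(a `|` b) = Newton(b), hence lies in b *)
Lemma circ_min_le a b y : circ (a, b) -> is_min lt b y -> {in a, forall x, le_of lt y x}.
Proof.
move=> /circP [_ vb _ ab] ymin x xa.
have [y' y'min] := ex_min mo (fsubsetP (fsubsetUr a b) _ ymin.1).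
have y'b : y' \in b by rewrite -(proj2 (Vert_fsetU_id a vb) ab); apply: vo.2.
have <- : y' = y.
  apply: (min_uniq mo _ ymin); apply: is_minP => // z zb.
  by apply: (min_le y'min); rewrite inE zb orbT.
by apply: (min_le y'min); rewrite inE xa.
Qed.

Lemma circ_min_numer a b y : circ (a, b) -> is_min lt b y -> y \in a -> is_min lt a y.
Proof. by move=> ab ymin ya; apply: is_minP => // x xa; exact: (circ_min_le ab ymin xa). Qed.

Lemma misses_min_lt a b y x :
  circ (a, b) -> misses_min lt (a, b) -> is_min lt b y -> x \in a -> lt y x.
Proof.
move=> ab miss ymin xa; case: (circ_min_le ab ymin xa) => // yx.
by move: (miss _ ymin); rewrite yx /= xa.
Qed.

Lemma misses_min_vmul_gt a b c y w z :
  circ (a, b) -> misses_min lt (a, b) -> is_min lt b y ->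
  {in c, forall x, le_of lt w x} -> z \in vmul a c -> lt (padd y w) z.
Proof.
move=> ab miss ymin wc /in_vmul [x [x' [xa x'c ->]]].
exact: (lt_le_of_add mo (misses_min_lt ab miss ymin xa) (wc _ x'c)).
Qed.

Lemma frac_addC p q : frac_add p q = frac_add q p.
Proof. by case: p q => [a b] [c d]; rewrite /frac_add /vadd /= fsetUC [vmul b d]vmulC. Qed.

Lemma misses_min_add p q : circ p -> circ q -> misses_min lt p -> misses_min lt q ->
  misses_min lt (frac_add p q).
Proof.
case: p q => [a b] [c d] ab cd pmiss qmiss y /= ymin.
have [yb ybmin] := circ_ex_min mo ab; have [yd ydmin] := circ_ex_min mo cd.
rewrite (min_uniq mo ymin (min_vmul ybmin ydmin)).
apply/negP => /(fsubsetP (Vert_sub _)); rewrite in_fsetU => /orP[] yy.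
  exact: (mo_irr mo (misses_min_vmul_gt ab pmiss ybmin (min_le ydmin) yy)).
move: (misses_min_vmul_gt cd qmiss ydmin (min_le ybmin) yy).
by rewrite paddC; apply: mo_irr.
Qed.

Lemma misses_min_addl p q : circ p -> circ q -> misses_min lt (frac_add p q) -> misses_min lt p.
Proof.
case: p q => [a b] [c d] ab cd miss y /= ybmin; apply/negP => ya.
have [yd ydmin] := circ_ex_min mo cd.
have amin := circ_min_numer ab ybmin ya.
move: (miss _ (min_vmul ybmin ydmin)) => /negP; apply; rewrite /= /vadd.
apply: vo.2; apply: is_minP.
  by rewrite in_fsetU; case: (min_vmul amin ydmin) => ->.
move=> z; rewrite in_fsetU => /orP[] /in_vmul [x [x' [xn x'd ->]]].
  exact: (le_of_add mo (circ_min_le ab ybmin xn) (min_le ydmin x'd)).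
by rewrite paddC; apply: (le_of_add mo (circ_min_le cd ydmin xn) (min_le ybmin x'd)).
Qed.

Lemma misses_min_addr p q : circ p -> circ q -> misses_min lt (frac_add p q) -> misses_min lt q.
Proof. by rewrite frac_addC => cp cq; apply: misses_min_addl. Qed.

Lemma misses_min_mul r p : circ r -> circ p -> misses_min lt p -> misses_min lt (frac_mul r p).
Proof.
case: r p => [c d] [a b] cd ab miss y /= ymin.
have [yd ydmin] := circ_ex_min mo cd; have [yb ybmin] := circ_ex_min mo ab.
rewrite (min_uniq mo ymin (min_vmul ydmin ybmin)) vmulC paddC; apply/negP => yy.
exact: (mo_irr mo (misses_min_vmul_gt ab miss ybmin (circ_min_le cd ydmin) yy)).
Qed.

Lemma misses_min_frac_eq p a b y0 : circ p -> frac_eq p (a, b) ->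
  is_min lt b y0 -> y0 \notin a -> misses_min lt p.
Proof.
case: p => p1 p2; rewrite /frac_eq /= => cp e y0min y0a y ymin; apply/negP => yp.
have := min_vmul (circ_min_numer cp ymin yp) y0min; rewrite e => yy0min.
have [x [x' [xa _ _]]] := in_vmul yy0min.1.
have [xm xmmin] := ex_min mo xa.
have := min_uniq mo yy0min (min_vmul xmmin ymin).
rewrite paddC => /paddIr exm; subst xm.
by move: y0a; rewrite xmmin.1.
Qed.

Lemma misses_min_eq p q : circ p -> circ q -> frac_eq p q -> misses_min lt p -> misses_min lt q.
Proof.
case: p => a b cp cq e miss; have [y ymin] := circ_ex_min mo cp.
by apply: misses_min_frac_eq cq _ ymin (miss _ ymin); rewrite /frac_eq e.
Qed.

Lemma misses_min_fzero : misses_min lt (fzero m).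
Proof. by move=> y _; rewrite inE. Qed.

Lemma not_misses_min_fone : ~ misses_min lt (fone m).
Proof.
move=> miss; have zmin : is_min lt (vone m) (pzero m).
  by split => [|z]; rewrite inE // => /eqP.
by move: (miss _ zmin); rewrite /= inE eqxx.
Qed.

Lemma misses_min_cmp_frac u v : misses_min lt (cmp_frac u v) <-> lt u v.
Proof.
have min2 s t : le_of lt s t -> is_min lt (vadd [fset s] [fset t]) s.
  move=> st; apply/min_Vert/is_minP; first by rewrite !inE eqxx.
  by move=> z; rewrite !inE => /orP[] /eqP ->; [left|].
split => [miss|uv y /= ymin].
  have [[uv|//]|vu] := le_of_total mo u v.
    by subst v; move: (miss _ (min2 u u (or_introl erefl))); rewrite /= inE eqxx.
  have := min2 v u (or_intror vu); rewrite /vadd fsetUC => /miss.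
  by rewrite /= inE eqxx.
rewrite (min_uniq mo ymin (min2 u v (or_intror uv))) inE; apply/eqP => uv'.
by subst v; exact: (mo_irr mo uv).
Qed.

Lemma misses_min_foldr_add (ps : seq frac) : (forall p, p \in ps -> circ p) ->
  misses_min lt (foldr (@frac_add m) (fzero m) ps) -> forall p, p \in ps -> misses_min lt p.
Proof.
have circ_sum qs : (forall p, p \in qs -> circ p) -> circ (foldr (@frac_add m) (fzero m) qs).
  elim: qs => [|q qs IH] cqs; first exact: circ_fzero.
  by apply: circ_add; [apply/cqs/mem_head | apply: IH => p pqs; apply/cqs/mem_behead].
elim: ps => [//|q ps IH] cps miss p; have cq := cps q (mem_head q ps).
have cps' r : r \in ps -> circ r by move=> rps; apply/cps/mem_behead.
rewrite inE => /orP[/eqP ->|pps]; first exact: misses_min_addl cq (circ_sum _ cps') miss.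
exact/IH/pps/(misses_min_addr cq (circ_sum _ cps') miss).
Qed.

End VertexOrder.

Lemma circ_cmp_frac m (u v : pt m) : circ (cmp_frac u v).
Proof.
apply/circP; split; [exact: Vert_fset1 | exact: Vert_idem | |].
  by apply/fset_neq0P; apply: (@Vert_nonempty _ _ u); rewrite !inE eqxx.
by move=> x nx; apply/newton_Vert/(newton_subset (fsubsetUr _ _)).
Qed.

(** * Weight orders and the separation of vertices *)

Section WeightOrder.
Variable m : nat.
Local Notation pt := (Defs.pt m).
Local Notation fsub := (Defs.fsub m).
Implicit Types (S : fsub) (s t u v w y : pt) (c : 'I_m -> R) (nu : pt -> R).

Definition dotv (c x : 'I_m -> R) : R := \sum_j c j * x j.

Definition weight c u := dotv c (embed u).

Definition lexlt u v :=
  exists j : 'I_m, (u j < v j)%nat /\ forall i : 'I_m, (i < j)%nat -> u i = v i.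

Definition weight_lt c u v :=
  weight c u < weight c v \/ (weight c u = weight c v /\ lexlt u v).

Lemma lexlt_irr u : ~ lexlt u u.
Proof. by case=> j []; rewrite ltnn. Qed.

Lemma lexlt_trans u v w : lexlt u v -> lexlt v w -> lexlt u w.
Proof.
move=> [j1 [uv1 e1]] [j2 [vw2 e2]].
have [j12|j21|/val_inj j12] := ltngtP j1 j2.
- exists j1; split; first by rewrite -(e2 j1 j12).
  by move=> i ij; rewrite e1 // e2 //; apply: ltn_trans ij j12.
- exists j2; split; first by rewrite (e1 j2 j21).
  by move=> i ij; rewrite e1 ?e2 //; apply: ltn_trans ij j21.
- subst j2; exists j1; split; first exact: ltn_trans uv1 vw2.
  by move=> i ij; rewrite e1 ?e2.
Qed.

Lemma lexlt_total u v : u <> v -> lexlt u v \/ lexlt v u.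
Proof.
move=> uv; have [j0 uvj0] : exists j, u j != v j.
  case: (pselect (exists j, u j != v j)) => // noj; case: uv.
  by apply/ffunP => j; apply/eqP; case: (boolP (u j == v j)) => // uvj; case: noj; exists j.
have [j uvj jmin] := @arg_minnP _ j0 (fun j => u j != v j) (fun j : 'I_m => val j) uvj0.
have below (i : 'I_m) : (i < j)%nat -> u i = v i.
  by move=> ij; apply/eqP; apply: contraTT ij => /jmin; rewrite -leqNgt.
have [ltj|gtj|eqj] := ltngtP (u j) (v j); last by rewrite eqj eqxx in uvj.
  by left; exists j.
by right; exists j; split => // i ij; rewrite below.
Qed.

Lemma lexlt_add u v w : lexlt u v -> lexlt (padd u w) (padd v w).
Proof.
move=> [j [uvj e]]; exists j; split; first by rewrite !paddE ltn_add2r.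
by move=> i ij; rewrite !paddE e.
Qed.

Lemma weightD c u v : weight c (padd u v) = weight c u + weight c v.
Proof.
by rewrite /weight /dotv -big_split; apply: eq_bigr => i _; rewrite /embed paddE natrD mulrDr.
Qed.

Lemma weight_gt0 c u : (forall i, 0 < c i) -> u <> pzero m -> 0 < weight c u.
Proof.
move=> c0 u0; have [j uj] : exists j, u j != 0%N.
  case: (pselect (exists j, u j != 0%N)) => // noj; case: u0.
  apply/ffunP => j; rewrite ffunE; apply/eqP.
  by case: (boolP (u j == 0%nat)) => // uj; case: noj; exists j.
rewrite /weight /dotv (bigD1 j) //=; apply: ltr_pwDl.
  by apply: mulr_gt0; rewrite // ltr0n lt0n.
by apply: sumr_ge0 => i _; apply: mulr_ge0; rewrite ?ler0n ?ltW.
Qed.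

Lemma weight_lt_monomial c : (forall i, 0 < c i) -> monomial_order (weight_lt c).
Proof.
move=> c0; split; first by move=> u [|[_]]; [rewrite ltxx | apply: lexlt_irr].
split.
  move=> u v w [uv|[euv uv]] [vw|[evw vw]].
  - by left; apply: lt_trans uv vw.
  - by left; rewrite -evw.
  - by left; rewrite euv.
  - by right; split; [rewrite euv evw | apply: lexlt_trans uv vw].
split.
  move=> u v uv; case: (ltgtP (weight c u) (weight c v)) => [||e].
  - by left; left.
  - by right; left.
  - by case: (lexlt_total uv); [left | right]; right.
split.
  move=> u u0; left; rewrite [X in X < _]big1 ?weight_gt0 // => i _.
  by rewrite /embed ffunE mulr0.
move=> u v w [uv|[euv uv]]; first by left; rewrite !weightD ltrD2r.
by right; split; [rewrite !weightD euv | apply: lexlt_add].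
Qed.

Lemma avg_ge_eq S nu (f : pt -> R) (a : R) :
  (forall s, 0 <= nu s) -> \sum_(s <- S) nu s = 1 ->
  (forall s, s \in S -> 0 < nu s -> a <= f s) -> \sum_(s <- S) nu s * f s <= a ->
  forall s, s \in S -> 0 < nu s -> f s = a.
Proof.
move=> nu0 nu1 fa avg s sS ns.
have term_ge0 t : t \in S -> 0 <= nu t * (f t - a).
  move=> tS; have [nt|nt] := ltrP 0 (nu t).
    by apply: mulr_ge0; rewrite ?subr_ge0 ?fa // ltW.
  by rewrite (_ : nu t = 0) ?mul0r //; apply: le_anti; rewrite nt nu0.
have sum0 : \sum_(t <- S) nu t * (f t - a) = 0.
  apply: le_anti; rewrite big_seq sumr_ge0 ?andbT; last by move=> t; apply: term_ge0.
  under eq_bigr do rewrite mulrBr.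
  by rewrite sumrB -mulr_suml -!big_seq nu1 mul1r subr_le0.
move: sum0; rewrite big_seq => /eqP; rewrite psumr_eq0 => [/allP/(_ s sS)|t]; last exact: term_ge0.
by rewrite sS mulf_eq0 gt_eqF //= subr_eq0 => /eqP.
Qed.

Lemma dotv_wmean c S nu : dotv c (wmean S nu) = \sum_(s <- S) nu s * weight c s.
Proof.
rewrite /dotv /weight; under eq_bigr do rewrite /wmean mulr_sumr.
rewrite exchange_big /=; apply: eq_bigr => s _; rewrite /dotv mulr_sumr.
by apply: eq_bigr => i _; rewrite /embed mulrCA.
Qed.

Section MinimumIsVertex.
Variables (c : 'I_m -> R) (S : fsub) (y : pt) (nu : pt -> R).
Hypotheses (c0 : forall i, 0 < c i) (ymin : is_min (weight_lt c) S y).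
Hypotheses (nu0 : forall s, 0 <= nu s) (nu1 : \sum_(s <- S) nu s = 1).
Hypothesis nuy : forall i, wmean S nu i <= (y i)%:R.

Lemma weight_min_support s : s \in S -> 0 < nu s -> weight c s = weight c y.
Proof.
move: s; apply: (avg_ge_eq nu0 nu1) => [t tS _|].
  have [->//|ty] := eqVneq t y.
  by case: (ymin.2 t tS (elimN eqP ty)) => [/ltW|[-> _]].
rewrite -dotv_wmean /dotv /weight; apply: ler_sum => i _.
by apply: ler_wpM2l; [apply/ltW | apply: nuy].
Qed.

Lemma weight_min_wmean i : wmean S nu i = (y i)%:R.
Proof.
have gap_ge0 j : 0 <= c j * ((y j)%:R - wmean S nu j).
  by apply: mulr_ge0; rewrite ?subr_ge0 ?nuy // ltW.
have term s : s \in S -> nu s * weight c s = nu s * weight c y.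
  move=> sS; have [ns|ns] := ltrP 0 (nu s); first by rewrite weight_min_support.
  by rewrite (_ : nu s = 0) ?mul0r //; apply: le_anti; rewrite ns nu0.
have gap0 : \sum_j c j * ((y j)%:R - wmean S nu j) = 0.
  under eq_bigr do rewrite mulrBr.
  rewrite sumrB; change (weight c y - dotv c (wmean S nu) = 0).
  rewrite dotv_wmean big_seq (eq_bigr _ term).
  by rewrite -big_seq -mulr_suml nu1 mul1r subrr.
have /eqP := psumr_eq0P (fun j _ => gap_ge0 j) gap0 (i := i) isT.
by rewrite mulf_eq0 gt_eqF //= subr_eq0 => /eqP.
Qed.

Lemma lex_min_support s : s \in S -> 0 < nu s -> s = y.
Proof.
have lex_ge t : t \in S -> 0 < nu t -> t = y \/ lexlt y t.
  move=> tS nt; have [->|ty] := eqVneq t y; first by left.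
  case: (ymin.2 t tS (elimN eqP ty)) => [|[_ yt]]; last by right.
  by rewrite weight_min_support // ltxx.
suff agree k t : t \in S -> 0 < nu t -> forall i : 'I_m, (i < k)%nat -> t i = y i.
  by move=> sS ns; apply/ffunP => i; apply: (agree m) => //.
elim: k t => [//|k IH] t tS nt i; rewrite ltnS leq_eqVlt => /orP[/eqP ik|]; last exact: IH.
have ge_i u : u \in S -> 0 < nu u -> ((y i)%:R : R) <= (u i)%:R.
  move=> uS nu_u; rewrite ler_nat; case: (lex_ge u uS nu_u) => [->//|[j [yuj below]]].
  have [ji|ij|/val_inj ji] := ltngtP j i; last by rewrite -ji ltnW.
  - by move: yuj; rewrite (IH u uS nu_u j) ?ltnn // -ik.
  - by rewrite below.
have := avg_ge_eq nu0 nu1 ge_i _ tS nt; rewrite -/(wmean S nu i) weight_min_wmean.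
by move=> /(_ (lexx _)) /eqP; rewrite eqr_nat => /eqP.
Qed.

End MinimumIsVertex.

Lemma weight_lt_vertex_order c : (forall i, 0 < c i) -> vertex_order (weight_lt c).
Proof.
move=> c0; split; first exact: weight_lt_monomial.
move=> S y ymin; rewrite in_Vert ymin.1; apply/asboolP.
apply: vertex_of_witness_support ymin.1 _ => nu nu0 nu1 nuy s sS sy.
have [ns|ns] := ltrP 0 (nu s); last by apply: le_anti; rewrite ns nu0.
by move: sy; rewrite (lex_min_support c0 ymin nu0 nu1 nuy sS ns) eqxx.
Qed.

End WeightOrder.

Section Gordan.
Variable m : nat.

Definition pos_functional (I : finType) (A : pred I) (v : I -> 'I_m -> R) :=
  exists c, forall i, A i -> 0 < dotv c (v i).

Definition pos_dependence (I : finType) (A : pred I) (v : I -> 'I_m -> R) :=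
  exists nu : I -> R, [/\ forall i, 0 <= nu i, exists2 i, A i & 0 < nu i &
    forall j, \sum_(i | A i) nu i * v i j = 0].

Lemma dotv_update (c x : 'I_m -> R) k t :
  dotv (fun j => if j == k then t else c j) x = dotv c x + (t - c k) * x k.
Proof.
rewrite /dotv (bigD1 k) //= eqxx [in RHS](bigD1 k) //=.
rewrite (eq_bigr (fun j => c j * x j)) => [|j /negbTE -> //]; ring.
Qed.

Lemma interval_between (I : finType) (P N : pred I) (l u : I -> R) :
  (forall p q, P p -> N q -> l p < u q) ->
  exists t, (forall p, P p -> l p < t) /\ (forall q, N q -> t < u q).
Proof.
move=> lu.
case: (pselect (exists p, P p)) => [[p0 Pp0]|noP];
  case: (pselect (exists q, N q)) => [[q0 Nq0]|noN].
- pose L := \big[Order.max/l p0]_(p | P p) l p; pose U := \big[Order.min/u q0]_(q | N q) u q.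
  have LU : L < U.
    apply/bigmax_ltP; split; first by apply: lt_bigmin => [|q Nq]; apply: lu.
    by move=> p Pp; apply: lt_bigmin => [|q Nq]; apply: lu.
  exists ((L + U) / 2); split => [p Pp|q Nq].
    have : l p <= L by apply: le_bigmax_cond.
    lra.
  have : U <= u q by apply: bigmin_le_cond.
  lra.
- pose L := \big[Order.max/l p0]_(p | P p) l p.
  exists (L + 1); split => [p Pp|q Nq]; last by case: noN; exists q.
  have : l p <= L by apply: le_bigmax_cond.
  lra.
- pose U := \big[Order.min/u q0]_(q | N q) u q.
  exists (U - 1); split => [p Pp|q Nq]; first by case: noP; exists p.
  have : U <= u q by apply: bigmin_le_cond.
  lra.
- by exists 0; split => [p Pp|q Nq]; [case: noP; exists p | case: noN; exists q].
Qed.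

Section FourierMotzkin.
Variables (I : finType) (A : pred I) (v : I -> 'I_m -> R) (k : 'I_m).
Local Notation a i := (v i k).

(* one step of Fourier-Motzkin elimination of the coordinate k *)
Definition fm_pred : pred (I + I * I) := fun x =>
  match x with
  | inl i => A i && (a i == 0)
  | inr (p, q) => [&& A p, 0 < a p, A q & a q < 0]
  end.

Definition fm_coef (x : I + I * I) (i : I) : R :=
  match x with
  | inl i' => (i == i')%:R
  | inr (p, q) => - a q * (i == p)%:R + a p * (i == q)%:R
  end.

Definition fm_vec (x : I + I * I) (j : 'I_m) : R := \sum_(i | A i) fm_coef x i * v i j.

Lemma fm_coef_inl i' i : fm_coef (inl i') i = (i == i')%:R.
Proof. by []. Qed.

Lemma fm_coef_inr p q i : fm_coef (inr (p, q)) i = - a q * (i == p)%:R + a p * (i == q)%:R.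
Proof. by []. Qed.

Lemma sum_delta_fin (p : I) (f : I -> R) : A p -> \sum_(i | A i) (i == p)%:R * f i = f p.
Proof.
move=> Ap; rewrite (bigD1 p) //= eqxx mul1r big1 ?addr0 // => i /andP[_ /negbTE ->].
by rewrite mul0r.
Qed.

Lemma fm_vec_inl i j : A i -> fm_vec (inl i) j = v i j.
Proof. exact: sum_delta_fin. Qed.

Lemma fm_vec_inr p q j : A p -> A q -> fm_vec (inr (p, q)) j = - a q * v p j + a p * v q j.
Proof.
move=> Ap Aq; rewrite /fm_vec; under eq_bigr do rewrite fm_coef_inr mulrDl -!mulrA.
by rewrite big_split -!mulr_sumr !sum_delta_fin.
Qed.

Lemma fm_vec_k x : fm_pred x -> fm_vec x k = 0.
Proof.
case: x => [i /andP[Ai /eqP ai]|[p q] /and4P[Ap _ Aq _]]; first by rewrite fm_vec_inl.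
by rewrite fm_vec_inr // mulNr mulrC addNr.
Qed.

Lemma fm_coef_ge0 x i : fm_pred x -> 0 <= fm_coef x i.
Proof.
case: x => [i' _|[p q] /and4P[_ ap _ aq]]; first by rewrite fm_coef_inl ler0n.
by rewrite fm_coef_inr; apply: addr_ge0; apply: mulr_ge0; rewrite ?ler0n ?oppr_ge0 ?ltW.
Qed.

Lemma fm_coef_gt0 x : fm_pred x -> exists2 i, A i & 0 < fm_coef x i.
Proof.
case: x => [i /andP[Ai _]|[p q] /and4P[Ap ap Aq aq]].
  by exists i; rewrite // fm_coef_inl eqxx ltr01.
have pq : p != q by apply: contraTneq ap => ->; rewrite -leNgt ltW.
by exists p; rewrite // fm_coef_inr eqxx (negbTE pq) mulr1n mulr0n mulr1 mulr0 addr0 oppr_gt0.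
Qed.

Lemma fm_lift_dependence : pos_dependence fm_pred fm_vec -> pos_dependence A v.
Proof.
move=> [nu [nu0 [x Ax nx] dep]].
exists (fun i => \sum_(x | fm_pred x) nu x * fm_coef x i); split.
- move=> i; apply: sumr_ge0 => y Ay; apply: mulr_ge0 => //; exact: fm_coef_ge0.
- have [i Ai ci] := fm_coef_gt0 Ax; exists i => //.
  rewrite (bigD1 x) //=; apply: ltr_pwDl; first exact: mulr_gt0.
  by apply: sumr_ge0 => y /andP[Ay _]; apply: mulr_ge0 => //; exact: fm_coef_ge0.
- move=> j; rewrite -[RHS](dep j); under eq_bigr do rewrite mulr_suml.
  rewrite exchange_big /=; apply: eq_bigr => y _; rewrite /fm_vec mulr_sumr.
  by apply: eq_bigr => i _; rewrite mulrA.
Qed.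

Lemma fm_lift_functional : pos_functional fm_pred fm_vec -> pos_functional A v.
Proof.
move=> [c pos]; pose d i := dotv c (v i).
(* with c k replaced by t, the pairing with v i becomes (t - g i) * a i *)
pose g i := c k - d i / a i.
have [t [gt tg]] : exists t, (forall p, A p && (0 < a p) -> g p < t) /\
                             (forall q, A q && (a q < 0) -> t < g q).
  apply: interval_between => p q /andP[Ap ap] /andP[Aq aq].
  have /pos : fm_pred (inr (p, q)) by apply/and4P.
  have -> : fm_vec (inr (p, q)) = fun j => - a q * v p j + a p * v q j.
    by apply: funext => j; rewrite fm_vec_inr.
  have -> : dotv c (fun j => - a q * v p j + a p * v q j) = - a q * d p + a p * d q.
    by rewrite /d /dotv !mulr_sumr -big_split; apply: eq_bigr => j _ /=; ring.
  have -> : - a q * d p + a p * d q = (g q - g p) * (a p * - a q).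
    by rewrite /g; field; rewrite (gt_eqF ap) (lt_eqF aq).
  by rewrite pmulr_lgt0 ?subr_gt0 // mulr_gt0 ?oppr_gt0.
exists (fun j => if j == k then t else c j) => i Ai; rewrite dotv_update -/(d i).
have [ai|ai|ai] := ltgtP (a i) 0; last first.
- rewrite ai mulr0 addr0; have /pos : fm_pred (inl i) by rewrite /= Ai ai eqxx.
  by have -> : fm_vec (inl i) = v i by apply: funext => j; rewrite fm_vec_inl.
- have -> : d i + (t - c k) * a i = (t - g i) * a i by rewrite /g; field; rewrite gt_eqF.
  by rewrite pmulr_lgt0 // subr_gt0 gt // Ai ai.
- have -> : d i + (t - c k) * a i = (t - g i) * a i by rewrite /g; field; rewrite lt_eqF.
  by rewrite nmulr_lgt0 // subr_lt0 tg // Ai ai.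
Qed.

End FourierMotzkin.

Lemma gordan_rec n (I : finType) (A : pred I) (v : I -> 'I_m -> R) :
  (forall i, A i -> forall j : 'I_m, (n <= j)%nat -> v i j = 0) ->
  pos_functional A v \/ pos_dependence A v.
Proof.
elim: n I A v => [|n IH] I A v vanish.
  case: (pselect (exists i, A i)) => [[i Ai]|noA]; [right | left].
    exists (fun=> 1); split => //; first by exists i => //; apply: ltr01.
    by move=> j; rewrite big1 // => i' Ai'; rewrite vanish // mulr0.
  by exists (fun=> 0) => i Ai; case: noA; exists i.
have [nm|mn] := ltnP n m; last first.
  apply: IH => i Ai j nj; apply: vanish => //.
  by move: (leq_trans (ltn_ord j) mn); rewrite ltnNge nj.
pose k := Ordinal nm.
have fm_vanish x : fm_pred A v k x -> forall j : 'I_m, (n <= j)%nat -> fm_vec A v k x j = 0.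
  move=> Ax j; rewrite leq_eqVlt => /orP[/eqP nj|nj].
    by rewrite (_ : j = k) ?fm_vec_k //; apply: val_inj.
  case: x Ax => [i /andP[Ai _]|[p q] /and4P[Ap _ Aq _]].
    by rewrite fm_vec_inl // vanish.
  by rewrite fm_vec_inr // (vanish p Ap j nj) (vanish q Aq j nj) !mulr0 addr0.
by case: (IH _ _ _ fm_vanish) => [/fm_lift_functional|/fm_lift_dependence]; [left | right].
Qed.

Lemma gordan (I : finType) (A : pred I) (v : I -> 'I_m -> R) :
  pos_functional A v \/ pos_dependence A v.
Proof. by apply: (@gordan_rec m) => i _ j; rewrite leqNgt ltn_ord. Qed.

Section PositiveOrthant.
Variables (I : finType) (A : pred I) (v : I -> 'I_m -> R).

Definition orthant_pred : pred (I + 'I_m) := fun x => if x is inl i then A i else true.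

Definition orthant_vec (x : I + 'I_m) : 'I_m -> R :=
  match x with inl i => v i | inr k => fun j => (j == k)%:R end.

Lemma sum_orthant (F : I + 'I_m -> R) :
  \sum_(x | orthant_pred x) F x = \sum_(i | A i) F (inl i) + \sum_k F (inr k).
Proof. by rewrite big_sumType. Qed.

Lemma dotv_delta (c : 'I_m -> R) k : dotv c (orthant_vec (inr k)) = c k.
Proof.
rewrite /dotv (bigD1 k) //= eqxx mulr1n mulr1 big1 ?addr0 // => j /negbTE jk.
by rewrite jk mulr0n mulr0.
Qed.

Lemma gordan_orthant :
  (exists c, (forall j, 0 < c j) /\ forall i, A i -> 0 < dotv c (v i)) \/
  (exists nu : I -> R, [/\ forall i, 0 <= nu i, exists2 i, A i & 0 < nu i &
     forall j, \sum_(i | A i) nu i * v i j <= 0]).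
Proof.
case: (gordan orthant_pred orthant_vec) => [[c pos]|[nu [nu0 [x Ax nx] dep]]].
  left; exists c; split => [j|i Ai]; last exact: (pos (inl i)).
  by rewrite -dotv_delta; apply: (pos (inr j)).
have depE j : \sum_(i | A i) nu (inl i) * v i j + nu (inr j) = 0.
  rewrite -[RHS](dep j) sum_orthant; congr (_ + _).
  rewrite (bigD1 j) //= eqxx mulr1n mulr1 big1 ?addr0 // => k /negbTE kj.
  by rewrite eq_sym kj mulr0n mulr0.
right; exists (fun i => nu (inl i)); split => // [|j]; last first.
  by have := depE j; have := nu0 (inr j); lra.
case: (pselect (exists2 i, A i & 0 < nu (inl i))) => // noA.
case: x Ax nx => [i Ai nxi|k _ nk]; first by case: noA; exists i.
have nuA0 i : A i -> nu (inl i) = 0.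
  move=> Ai; apply: le_anti; rewrite nu0 andbT leNgt; apply/negP => nxi.
  by apply: noA; exists i.
have := depE k; rewrite big1 => [|i Ai]; last by rewrite nuA0 ?mul0r.
by rewrite add0r => nk0; rewrite nk0 ltxx in nk.
Qed.

End PositiveOrthant.

End Gordan.

Section Separation.
Variable m : nat.
Local Notation pt := (Defs.pt m).
Variables (b : Defs.fsub m) (y : pt).
Hypotheses (yb : y \in b) (yvert : is_vertex b (embed y)).

Lemma vertex_no_dependence (nu : b -> R) : (forall s, 0 <= nu s) ->
  (exists2 s, val s != y & 0 < nu s) ->
  ~ (forall j, \sum_(s | val s != y) nu s * ((val s j)%:R - (y j)%:R) <= 0).
Proof.
move=> nu0 [s0 s0y ns0] dep.
pose mu (t : pt) : R := if t != y then nu (insubd [` yb] t) else 0.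
have mu0 t : 0 <= mu t by rewrite /mu; case: ifP.
have sum_mu (g : pt -> R) :
    \sum_(t <- b) mu t * g t = \sum_(s : b | val s != y) nu s * g (val s).
  rewrite big_seq_fsetE [RHS]big_mkcond; apply: eq_bigr => s _; rewrite /mu valKd.
  by case: (val s != y) => //; rewrite mul0r.
pose N := \sum_(t <- b) mu t.
have N_gt0 : 0 < N.
  rewrite /N (big_fsetD1 (val s0)) ?fsvalP //=; apply: ltr_pwDl.
    by rewrite /mu s0y valKd.
  by apply: sumr_ge0 => t _.
have lam0 t : 0 <= mu t / N by apply: divr_ge0 => //; apply: ltW.
have lam1 : \sum_(t <- b) mu t / N = 1 by rewrite -mulr_suml mulfV ?gt_eqF.
have : 0 < mu y / N.
  apply: vertex_witness_pos yvert lam0 lam1 _ => j; rewrite /wmean.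
  under eq_bigr do rewrite mulrAC; rewrite -mulr_suml ler_pdivrMr //.
  have := dep j; under eq_bigr do rewrite mulrBr.
  rewrite sumrB -(sum_mu (fun t => (t j)%:R)) -(sum_mu (fun=> (y j)%:R)) -mulr_suml -/N.
  lra.
by rewrite /mu eqxx mul0r ltxx.
Qed.

Lemma vertex_separation : exists c, (forall i, 0 < c i) /\
  forall s, s \in b -> s != y -> weight c y < weight c s.
Proof.
case: (gordan_orthant (fun s : b => val s != y)
                      (fun s j => (val s j)%:R - (y j)%:R)) => [[c [c0 pos]]|[nu [nu0 pos dep]]].
  exists c; split => // s sb sy; have := pos [` sb] sy.
  by rewrite /dotv; under eq_bigr do rewrite mulrBr; rewrite sumrB subr_gt0.
by case: (vertex_no_dependence nu0 pos dep).
Qed.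

End Separation.

Lemma vertex_weight_order m (b : Defs.fsub m) y : y \in b -> is_vertex b (embed y) ->
  exists lt, vertex_order lt /\ is_min lt b y.
Proof.
move=> yb yvert; have [c [c0 cy]] := vertex_separation yb yvert.
exists (weight_lt c); split; first exact: weight_lt_vertex_order.
by split => // s sb sy; left; apply: cy => //; apply/eqP.
Qed.

(** * Maximal k-ideals *)

Section MaximalKIdeal.
Variable m : nat.
Local Notation pt := (Defs.pt m).
Local Notation fsub := (Defs.fsub m).
Local Notation frac := (Defs.frac m).
Implicit Types (b : fsub) (u v w y : pt) (p q : frac) (lt : pt -> pt -> Prop).
Variable I : frac -> Prop.
Hypothesis maxI : maximal_k_ideal I.

Let I_circ p : I p -> circ p := maxI.1.1.1.1 p.
Let I_eq p q : circ q -> frac_eq p q -> I p -> I q := maxI.1.1.1.2 p q.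
Let I_add p q : I p -> I q -> I (frac_add p q) := maxI.1.1.2.2.1 p q.
Let I_mul r p : circ r -> I p -> I (frac_mul r p) := maxI.1.1.2.2.2 r p.
Let I_fzero : I (fzero m) := maxI.1.1.2.1.

Lemma maximal_not_fone : ~ I (fone m).
Proof.
move=> I1; have [p [cp /(_ (I_eq cp _ (I_mul cp I1)))]] := maxI.2.1; apply.
case: p cp => a b /circP [va vb _ _].
by rewrite /frac_eq /frac_mul /= !vmul_vone va vb.
Qed.

(* an element a/b of I is not 1, so some vertex of b is missing from a; separate it *)
Lemma ideal_misses_min q : I q -> exists lt, vertex_order lt /\ misses_min lt q.
Proof.
case: q => a b Iq; have /circP [va vb _ ab] := I_circ Iq.
case: (pselect (exists2 y, y \in b & y \notin a)) => [[y yb ya]|noy].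
  have : y \in Vert b by rewrite vb.
  rewrite in_Vert => /andP[_ /asboolP yvert].
  have [lt [vo ymin]] := vertex_weight_order yb yvert.
  by exists lt; split => // y' /= y'min; rewrite (min_uniq vo.1 y'min ymin).
have ba : b `<=` a.
  by apply/fsubsetP => y yb; apply: contraT => ya; case: noy; exists y.
have eab : a = b by rewrite -va -[b](proj2 (Vert_fsetU_id a vb) ab) (fsetUidPl _ _ ba).
case: maximal_not_fone; apply: (I_eq (circ_fone m) _ Iq).
by rewrite /frac_eq /= vmul_vone [vmul (vone m) _]vmulC vmul_vone eab vb.
Qed.

Lemma ideal_foldr_add (ps : seq frac) :
  (forall p, p \in ps -> I p) -> I (foldr (@frac_add m) (fzero m) ps).
Proof.
elim: ps => [|p ps IH] Ips; first exact: I_fzero.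
by apply: I_add; [apply/Ips/mem_head | apply: IH => q qps; apply/Ips/mem_behead].
Qed.

Lemma ideal_seq_misses_min (ps : seq frac) : (forall p, p \in ps -> I p) ->
  exists lt, vertex_order lt /\ forall p, p \in ps -> misses_min lt p.
Proof.
move=> Ips; have [lt [vo miss]] := ideal_misses_min (ideal_foldr_add Ips).
by exists lt; split => //; apply: (misses_min_foldr_add vo _ miss) => p /Ips /I_circ.
Qed.

Definition saturation (Phi : (pt -> pt -> Prop) -> Prop) (w : frac) :=
  circ w /\ exists2 i, I i &
    forall lt, vertex_order lt -> misses_min lt i -> Phi lt -> misses_min lt w.

Lemma saturation_k_ideal Phi : k_ideal (saturation Phi).
Proof.
split; [split; [split|split; [|split]]|].
- by move=> p [].
- move=> p q cq e [cp [i Ii sat]]; split => //; exists i => // lt vo miss phi.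
  exact: (misses_min_eq vo cp cq e (sat lt vo miss phi)).
- split; first exact: (circ_fzero m).
  by exists (fzero m) => [|lt vo _ _]; [exact: I_fzero | apply: misses_min_fzero].
- move=> p q [cp [i Ii psat]] [cq [j Ij qsat]]; split; first exact: circ_add.
  exists (frac_add i j); first exact: I_add.
  move=> lt vo miss phi; apply: (misses_min_add vo cp cq).
    exact: (psat _ vo (misses_min_addl vo (I_circ Ii) (I_circ Ij) miss) phi).
  exact: (qsat _ vo (misses_min_addr vo (I_circ Ii) (I_circ Ij) miss) phi).
- move=> r p cr [cp [i Ii sat]]; split; first exact: circ_mul.
  by exists i => // lt vo miss phi; apply: (misses_min_mul vo cr cp (sat _ vo miss phi)).
- move=> p q cp cq [_ [i Ii sat]] _; split => //; exists i => // lt vo miss phi.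
  exact: (misses_min_addr vo cp cq (sat lt vo miss phi)).
Qed.

(* the saturation of I is a proper k-ideal containing I *)
Lemma maximal_saturated (Phi : (pt -> pt -> Prop) -> Prop) :
  (forall i, I i -> exists lt, [/\ vertex_order lt, misses_min lt i & Phi lt]) ->
  forall z, circ z -> (forall lt, vertex_order lt -> Phi lt -> misses_min lt z) -> I z.
Proof.
move=> adapted z cz zmiss; apply: (maxI.2.2 _ (saturation_k_ideal Phi)).
- exists (fone m); split => [|[_ [i Ii sat]]]; first exact: (circ_fone m).
  have [lt [vo miss phi]] := adapted i Ii.
  exact: (not_misses_min_fone (sat lt vo miss phi)).
- by move=> p Ip; split; [exact: I_circ | exists p].
- by split => //; exists (fzero m) => [|lt vo _]; [exact: I_fzero | apply: zmiss].
Qed.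

Definition ideal_lt u v := I (cmp_frac u v).

Lemma ideal_lt_common (uvs : seq (pt * pt)) : (forall uv, uv \in uvs -> ideal_lt uv.1 uv.2) ->
  exists lt, vertex_order lt /\ forall uv, uv \in uvs -> lt uv.1 uv.2.
Proof.
move=> Iuvs; have [|lt [vo miss]] := @ideal_seq_misses_min [seq cmp_frac uv.1 uv.2 | uv <- uvs].
  by move=> p /mapP [uv uvin ->]; apply: Iuvs.
by exists lt; split => // uv uvin; apply/(misses_min_cmp_frac vo)/miss/map_f.
Qed.

Lemma ideal_lt_irr u : ~ ideal_lt u u.
Proof.
move=> /ideal_misses_min [lt [vo /(misses_min_cmp_frac vo) uu]].
exact: (mo_irr vo.1 uu).
Qed.

Lemma not_ideal_lt u v : ~ ideal_lt u v ->
  exists2 i, I i & forall lt, vertex_order lt -> misses_min lt i -> ~ lt u v.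
Proof.
move=> nuv; apply: (contra_notP _ nuv) => noi.
apply: (@maximal_saturated (fun lt => lt u v)) (circ_cmp_frac u v) _ => [i Ii|lt vo uv].
  apply: (contra_notP _ noi) => nolt; exists i => // lt vo miss uv.
  by apply: nolt; exists lt.
exact/(misses_min_cmp_frac vo).
Qed.

Lemma ideal_lt_total u v : u <> v -> ideal_lt u v \/ ideal_lt v u.
Proof.
move=> uv; case: (pselect (ideal_lt u v)) => [|/not_ideal_lt [i Ii inuv]]; first by left.
case: (pselect (ideal_lt v u)) => [|/not_ideal_lt [j Ij jnvu]]; first by right.
have [|lt [vo miss]] := @ideal_seq_misses_min [:: i; j].
  by move=> p; rewrite !inE => /orP[] /eqP ->.
exfalso; case: (mo_total vo.1 uv).
  exact: (inuv _ vo (miss i (mem_head _ _))).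
by apply: (jnvu _ vo (miss j _)); rewrite !inE eqxx orbT.
Qed.

Lemma ideal_lt_trans u v w : ideal_lt u v -> ideal_lt v w -> ideal_lt u w.
Proof.
move=> luv lvw; case: (pselect (u = w)) => [uw|uw]; first subst u.
  have [|lt [vo l]] := @ideal_lt_common [:: (w, v); (v, w)].
    by move=> uv; rewrite !inE => /orP[] /eqP ->.
  by case: (mo_asym vo.1 (l _ (mem_head _ _)) (l (v, w) _)); rewrite !inE eqxx orbT.
case: (ideal_lt_total uw) => // lwu.
have [|lt [vo l]] := @ideal_lt_common [:: (u, v); (v, w); (w, u)].
  by move=> uv; rewrite !inE => /or3P[] /eqP ->.
have luv' := l (u, v) (mem_head _ _).
have lvw' := l (v, w); have lwu' := l (w, u); rewrite !inE !eqxx ?orbT in lvw' lwu'.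
case: (mo_irr vo.1 (mo_trans vo.1 (mo_trans vo.1 luv' (lvw' isT)) (lwu' isT))).
Qed.

Lemma ideal_lt_gt0 u : u <> pzero m -> ideal_lt (pzero m) u.
Proof.
move=> u0; case: (ideal_lt_total (nesym u0)) => // /ideal_misses_min [lt [vo]].
move=> /(misses_min_cmp_frac vo) u0'; case: (mo_asym vo.1 u0' (mo_gt0 vo.1 u0)).
Qed.

Lemma ideal_lt_addr w u v : ideal_lt u v -> ideal_lt (padd u w) (padd v w).
Proof.
move=> luv; have uv : padd u w <> padd v w.
  by move=> /paddIr e; move: luv; rewrite e; apply: ideal_lt_irr.
case: (ideal_lt_total uv) => // lvu.
have [|lt [vo l]] := @ideal_lt_common [:: (u, v); (padd v w, padd u w)].
  by move=> xy; rewrite !inE => /orP[] /eqP ->.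
have := l (padd v w, padd u w); rewrite !inE eqxx orbT => /(_ isT).
by move/(mo_asym vo.1 (mo_addr vo.1 w (l _ (mem_head _ _)))).
Qed.

Lemma ideal_lt_monomial : monomial_order ideal_lt.
Proof.
split; first exact: ideal_lt_irr.
split; first exact: ideal_lt_trans.
split; first exact: ideal_lt_total.
split; first exact: ideal_lt_gt0.
by move=> u v w; apply: ideal_lt_addr.
Qed.

Lemma ideal_min_order b y0 : is_min ideal_lt b y0 ->
  forall i, I i -> exists lt, [/\ vertex_order lt, misses_min lt i & is_min lt b y0].
Proof.
move=> [y0b y0min] i Ii.
have [|lt [vo miss]] := @ideal_seq_misses_min (i :: [seq cmp_frac y0 y | y <- b & y != y0]).
  move=> p; rewrite inE => /orP[/eqP->//|/mapP [y]].
  by rewrite mem_filter => /andP[/eqP yy0 yb] ->; apply: y0min.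
exists lt; split => //; first exact/miss/mem_head.
split => // z zb zy0; apply/(misses_min_cmp_frac vo)/miss.
by rewrite inE; apply/orP; right; apply/map_f; rewrite mem_filter zb andbT; apply/eqP.
Qed.

End MaximalKIdeal.

Theorem corollary4p12 (m : nat) (I : Defs.frac m -> Prop) :
  maximal_k_ideal I ->
  exists lt : pt m -> pt m -> Prop,
    monomial_order lt /\
    forall p, circ p -> (I p <-> mdagger lt p).
Proof.
move=> maxI; exists (ideal_lt I); split; first exact: ideal_lt_monomial.
move=> [a b] cp; have [y0 y0min] := circ_ex_min (ideal_lt_monomial maxI) cp.
split => [Ip|[_ [a' [b' [_ [e [y [ymin ya']]]]]]]].
  have [lt [_ miss y0min']] := ideal_min_order maxI y0min Ip.
  split => //; exists a, b; split; first by case: cp.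
  by split => //; exists y0; split => //; apply: miss y0min'.
apply: (maximal_saturated maxI (Phi := fun lt => is_min lt b' y) _ cp) => [i Ii|lt vo ymin'].
  exact: (ideal_min_order maxI ymin Ii).
exact: (misses_min_frac_eq vo cp e ymin' ya').
Qed.
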